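(* Let $l<u$ be real, let $\Delta Q$ be real with $0<\Delta Q\le u-l$, and let $\epsilon\ge0$, $0\le\delta<1$. Let $b^*>0$ satisfy $f(b^* )=b^*$. Then for every $\xi>0$, $f(b^*+\xi)$ is defined and $b^*+\xi> f(b^*+\xi)$.
   Context: For $b>0$ and $p\in[l,u]$, $C_p(b)= 1-\frac12\left(e^{-\frac{p-l}{b}}+e^{-\frac{u-p}{b}}\right)$ (the integral $\int_l^u\frac{1}{2b}e^{-|x-p|/b}dx$), and $\Delta C(b)=\frac{C_{l+\Delta Q}(b)}{C_l(b)}$. The map $f$ is defined for $b>0$ with $\epsilon-\log\Delta C(b)-\log(1-\delta)\neq 0$ by $f(b)=\frac{\Delta Q}{\epsilon-\log\Delta C(b)-\log(1-\delta)}$. *)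

From Stdlib Require Import Reals Lra.
Open Scope R_scope.

Definition Cp (l u p b : R) : R :=
  1 - / 2 * (exp (- ((p - l) / b)) + exp (- ((u - p) / b))).

Definition DeltaC (l u dQ b : R) : R := Cp l u (l + dQ) b / Cp l u l b.

Definition fden (l u dQ eps delta b : R) : R :=
  eps - ln (DeltaC l u dQ b) - ln (1 - delta).

Definition f_defined (l u dQ eps delta b : R) : Prop :=
  0 < b /\ fden l u dQ eps delta b <> 0.

Definition fmap (l u dQ eps delta b : R) : R := dQ / fden l u dQ eps delta b.

(* With x = exp(-ΔQ/b) and y = exp(-(u-l-ΔQ)/b) one has
   ΔC(b) = (2-x-y)/(1-xy), which decreases in each of x and y because the
   cross-multiplied difference is (x2-x1)(1-y)^2.  As x and y increase with b,
   ΔC is antitone, so the denominator of f is monotone in b.  At a fixed point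
   the denominator is positive (ΔQ > 0 and bstar > 0), hence for b > bstar it
   is positive and at least its value at bstar, giving
   f(b) <= f(bstar) = bstar < b. *)
From Stdlib Require Import Reals Lra Psatz.
Open Scope R_scope.

Lemma exp_le_exp (x y : R) : x <= y -> exp x <= exp y.
Proof. intros [Hlt | ->]; [left; now apply exp_increasing | now right]. Qed.

Lemma ln_le_ln (x y : R) : 0 < x -> x <= y -> ln x <= ln y.
Proof. intros Hx [Hlt | ->]; [left; now apply ln_increasing | now right]. Qed.

Lemma exp_neg_div_le_exp_neg_div (c b1 b2 : R) :
  0 <= c -> 0 < b1 -> b1 <= b2 -> exp (- (c / b1)) <= exp (- (c / b2)).
Proof.
  intros Hc Hb1 Hb12.
  apply exp_le_exp, Ropp_le_contravar, Rmult_le_compat_l; [exact Hc |].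
  now apply Rinv_le_contravar.
Qed.

Lemma exp_neg_div_le_1 (c b : R) : 0 <= c -> 0 < b -> exp (- (c / b)) <= 1.
Proof.
  intros Hc Hb. rewrite <- exp_0. apply exp_le_exp.
  enough (0 <= c / b) by lra.
  apply Rmult_le_pos; [exact Hc | left; now apply Rinv_0_lt_compat].
Qed.

Lemma exp_neg_div_lt_1 (c b : R) : 0 < c -> 0 < b -> exp (- (c / b)) < 1.
Proof.
  intros Hc Hb. rewrite <- exp_0. apply exp_increasing.
  enough (0 < c / b) by lra.
  now apply Rdiv_lt_0_compat.
Qed.

Definition ratio (x y : R) : R := (2 - x - y) / (1 - x * y).

Lemma ratioC (x y : R) : ratio x y = ratio y x.
Proof. unfold ratio. f_equal; ring. Qed.

Lemma ratio_pos (x y : R) : 0 <= x -> x < 1 -> 0 <= y -> y <= 1 -> 0 < ratio x y.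
Proof. intros. apply Rdiv_lt_0_compat; nra. Qed.

Lemma ratio_le_l (x1 x2 y : R) :
  0 <= x1 -> x1 <= x2 -> 0 <= y -> y <= 1 -> x2 * y < 1 ->
  ratio x2 y <= ratio x1 y.
Proof.
  intros Hx1 Hx12 Hy Hy1 Hx2y.
  assert (Hx1y : x1 * y < 1) by nra.
  unfold ratio, Rdiv.
  apply Rmult_le_reg_r with ((1 - x2 * y) * (1 - x1 * y)); [nra |].
  field_simplify; [| lra | lra].
  assert (0 <= (x2 - x1) * (1 - y) ^ 2) by (apply Rmult_le_pos; nra).
  nra.
Qed.

Lemma ratio_antitone (x1 x2 y1 y2 : R) :
  0 <= x1 -> x1 <= x2 -> x2 < 1 -> 0 <= y1 -> y1 <= y2 -> y2 <= 1 ->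
  ratio x2 y2 <= ratio x1 y1.
Proof.
  intros. apply Rle_trans with (ratio x1 y2).
  - apply ratio_le_l; nra.
  - rewrite (ratioC x1 y2), (ratioC x1 y1). apply ratio_le_l; nra.
Qed.

Lemma DeltaC_ratio (l u a b : R) : 0 < b ->
  DeltaC l u a b = ratio (exp (- (a / b))) (exp (- ((u - l - a) / b))).
Proof.
  intros Hb. unfold DeltaC, Cp, ratio.
  replace (l + a - l) with a by ring.
  replace (u - (l + a)) with (u - l - a) by ring.
  replace (- ((l - l) / b)) with 0 by (field; lra).
  replace (- ((u - l) / b)) with (- (a / b) + - ((u - l - a) / b)) by (field; lra).
  rewrite exp_0, exp_plus.
  set (x := exp (- (a / b))); set (y := exp (- ((u - l - a) / b))).
  replace (1 - / 2 * (x + y)) with (/ 2 * (2 - x - y)) by field.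
  replace (1 - / 2 * (1 + x * y)) with (/ 2 * (1 - x * y)) by field.
  unfold Rdiv. rewrite Rinv_mult, Rinv_inv.
  replace (/ 2 * (2 - x - y) * (2 * / (1 - x * y)))
    with (/ 2 * 2 * ((2 - x - y) * / (1 - x * y))) by ring.
  rewrite Rinv_l by lra. ring.
Qed.

Section DeltaC_monotone.

Variables l u a : R.
Hypotheses (Ha : 0 < a) (Ha_le : a <= u - l).

Lemma DeltaC_pos (b : R) : 0 < b -> 0 < DeltaC l u a b.
Proof.
  intros Hb. rewrite DeltaC_ratio by exact Hb.
  apply ratio_pos.
  - left; apply exp_pos.
  - now apply exp_neg_div_lt_1.
  - left; apply exp_pos.
  - apply exp_neg_div_le_1; lra.
Qed.

Lemma DeltaC_antitone (b1 b2 : R) :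
  0 < b1 -> b1 <= b2 -> DeltaC l u a b2 <= DeltaC l u a b1.
Proof.
  intros Hb1 Hb12.
  rewrite !DeltaC_ratio by lra.
  apply ratio_antitone.
  - left; apply exp_pos.
  - apply exp_neg_div_le_exp_neg_div; lra.
  - apply exp_neg_div_lt_1; lra.
  - left; apply exp_pos.
  - apply exp_neg_div_le_exp_neg_div; lra.
  - apply exp_neg_div_le_1; lra.
Qed.

Lemma fden_monotone (eps delta b1 b2 : R) :
  0 < b1 -> b1 <= b2 -> fden l u a eps delta b1 <= fden l u a eps delta b2.
Proof.
  intros Hb1 Hb12. unfold fden.
  enough (ln (DeltaC l u a b2) <= ln (DeltaC l u a b1)) by lra.
  apply ln_le_ln; [apply DeltaC_pos; lra | now apply DeltaC_antitone].
Qed.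

End DeltaC_monotone.

Lemma div_pos_inv (a g : R) : 0 < a -> 0 < a / g -> 0 < g.
Proof.
  intros Ha Hag. destruct (Rdiv_pos_cases a g Hag) as [[_ Hg] | [Ha' _]]; lra.
Qed.

Theorem mainTheorem9 (l u dQ eps delta bstar : R) :
  l < u ->
  0 < dQ -> dQ <= u - l ->
  0 <= eps -> 0 <= delta -> delta < 1 ->
  0 < bstar ->
  f_defined l u dQ eps delta bstar ->
  fmap l u dQ eps delta bstar = bstar ->
  forall xi : R, 0 < xi ->
    f_defined l u dQ eps delta (bstar + xi) /\
    bstar + xi > fmap l u dQ eps delta (bstar + xi).
Proof.
  intros _ HdQ HdQ_le _ _ _ Hb _ Hfix xi Hxi.
  unfold fmap, f_defined in *.
  set (g0 := fden l u dQ eps delta bstar) in *.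
  set (g := fden l u dQ eps delta (bstar + xi)).
  assert (Hg0 : 0 < g0) by (apply (div_pos_inv dQ); [| rewrite Hfix]; lra).
  assert (Hg : g0 <= g) by (apply fden_monotone; lra).
  split; [split; lra |].
  enough (dQ / g <= dQ / g0) by lra.
  apply Rmult_le_compat_l; [lra |].
  now apply Rinv_le_contravar.
Qed.
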